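(* Let $L$ be a finite multiset of positive integers. If $L$ admits a special linear realization of type $2$, then for every integer $b\geq 2$ the multiset $L\cup\{2^b\}$ also admits a special linear realization of type $2$.
   Context: For a multiset $L$ of positive integers with $|L|=v-1$, each at most $v-1$, a linear realization of $L$ is a Hamiltonian path $[x_0,x_1,\dots,x_{v-1}]$ of the complete graph on $\{0,1,\dots,v-1\}$ such that the multiset $\{|x_i-x_{i+1}| : i=0,\dots,v-2\}$ equals $L$. A linear realization is special of type $2$ if its two endpoints are $0$ and $1$. $\{2^b\}$ denotes the multiset of $b$ copies of $2$, and $\cup$ is multiset union. *)

From mathcomp Require Import all_boot.
Set Implicit Arguments. Unset Strict Implicit. Unset Printing Implicit Defensive.

Definition absdiff (a b : nat) : nat := (a - b) + (b - a).

Definition path_lengths (x : seq nat) : seq nat :=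
  match x with
  | [::] => [::]
  | x0 :: s => pairmap absdiff x0 s
  end.

(* x = [x_0,...,x_{v-1}] is a linear realization of L, where v = |L| + 1:
   x is a Hamiltonian path of K_v on {0,...,v-1} (a permutation of 0..v-1)
   and the multiset of its edge lengths equals L. *)
Definition linear_realization (L : seq nat) (x : seq nat) : Prop :=
  perm_eq x (iota 0 (size L).+1) /\ perm_eq (path_lengths x) L.

Definition special2_realization (L : seq nat) (x : seq nat) : Prop :=
  linear_realization L x /\
  ((head 0 x == 0) && (last 0 x == 1) || (head 0 x == 1) && (last 0 x == 0)).

(* Reversing a path preserves its lengths, so we may work with realizations
   running from 0 to 1.  Such a realization extends by two edges of length 2:
   shift it by 2 and go 0 -> 2 -> ... -> 3 -> 1.  It also extends by three:
   reverse it, shift it by 3 and go 0 -> 2 -> 4 -> ... -> 3 -> 1.  Since every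
   b >= 2 is a sum of 2s and 3s, iterating gives the claim. *)

From mathcomp Require Import all_boot.

Lemma head_rev (T : Type) (x0 : T) s : head x0 (rev s) = last x0 s.
Proof. by case/lastP: s => // s a; rewrite rev_rcons last_rcons. Qed.

Lemma last_rev (T : Type) (x0 : T) s : last x0 (rev s) = head x0 s.
Proof. by case: s => // a s; rewrite rev_cons last_rcons. Qed.

Lemma absdiffC a b : absdiff a b = absdiff b a.
Proof. by rewrite /absdiff addnC. Qed.

Lemma absdiffDl c a b : absdiff (c + a) (c + b) = absdiff a b.
Proof. by rewrite /absdiff !subnDl. Qed.

Lemma path_lengths_map_addn c x :
  path_lengths (map (addn c) x) = path_lengths x.
Proof.
case: x => [|a s] //=.
by elim: s a => [|y s IH] a //=; rewrite absdiffDl IH.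
Qed.

Lemma path_lengths_rcons x b : x != [::] ->
  path_lengths (rcons x b) = rcons (path_lengths x) (absdiff (last 0 x) b).
Proof. by case: x => [|a s] //= _; rewrite -!cats1 pairmap_cat. Qed.

Lemma path_lengths_cons_rcons a x b : x != [::] ->
  path_lengths (a :: rcons x b)
  = absdiff a (head 0 x) :: rcons (path_lengths x) (absdiff (last 0 x) b).
Proof. by case: x => [|c s] //= _; rewrite -!cats1 pairmap_cat. Qed.

Lemma path_lengths_rev x : path_lengths (rev x) = rev (path_lengths x).
Proof.
case: x => [|a s] //.
elim: s a => [|c s IH] a //.
have rev_nonnil : rev (c :: s) != [::] by rewrite -size_eq0 size_rev.
rewrite rev_cons path_lengths_rcons // IH rev_cons last_rcons /=.
by rewrite rev_cons absdiffC.
Qed.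

Lemma perm_iota_map_addn c n x :
  perm_eq x (iota 0 n) -> perm_eq (map (addn c) x) (iota c n).
Proof. by move=> /(perm_map (addn c)); rewrite -iotaDl addn0. Qed.

Lemma linear_realization_rev L x :
  linear_realization L x -> linear_realization L (rev x).
Proof. by case=> vx lx; split; rewrite ?path_lengths_rev perm_rev. Qed.

Definition realizable01 (L : seq nat) :=
  exists x, [/\ linear_realization L x, head 0 x = 0 & last 0 x = 1].

Lemma special2_realizable01 L x :
  special2_realization L x -> realizable01 L.
Proof.
case=> rx /orP[/andP[/eqP hx /eqP lx] | /andP[/eqP hx /eqP lx]]; first by exists x.
by exists (rev x); rewrite head_rev last_rev; split; first exact: linear_realization_rev.
Qed.

Lemma realizable01_add2 L : realizable01 L -> realizable01 (L ++ nseq 2 2).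
Proof.
case=> [[|a s]] [[vx lx] hx ls] //=; rewrite /= in hx ls; subst a.
exists (0 :: rcons (map (addn 2) (0 :: s)) 1); split=> //; last by rewrite /= last_rcons.
split.
- rewrite size_cat addn2 -[iota 0 _]/(0 :: 1 :: iota 2 (size L).+1).
  by rewrite perm_cons perm_rcons perm_cons; exact: perm_iota_map_addn.
- rewrite path_lengths_cons_rcons // path_lengths_map_addn /= last_map ls.
  rewrite -rcons_cons perm_rcons -[_ :: _]/([:: 2; 2] ++ path_lengths (0 :: s)).
  by rewrite perm_catC perm_cat2r.
Qed.

Lemma realizable01_add3 L : realizable01 L -> realizable01 (L ++ nseq 3 2).
Proof.
case=> x [/linear_realization_rev rx hx lx].
rewrite -last_rev in hx; rewrite -head_rev in lx.
case: (rev x) rx hx lx => [|a s] [vy ly] //= ls ha; subst a.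
exists (0 :: 2 :: rcons (map (addn 3) (1 :: s)) 1); split=> //; last by rewrite /= last_rcons.
split.
- rewrite size_cat addn3 -[iota 0 _]/(0 :: 1 :: 2 :: iota 3 (size L).+1).
  rewrite perm_cons -rcons_cons perm_rcons !perm_cons.
  exact: perm_iota_map_addn.
- rewrite -[path_lengths _]/(2 :: path_lengths (2 :: rcons (map (addn 3) (1 :: s)) 1)).
  rewrite path_lengths_cons_rcons // path_lengths_map_addn /= last_map ls.
  rewrite -!rcons_cons perm_rcons.
  rewrite -[_ :: _]/([:: 2; 2; 2] ++ path_lengths (1 :: s)).
  by rewrite perm_catC perm_cat2r.
Qed.

Lemma realizable01_nseq2 L b :
  realizable01 L -> 2 <= b -> realizable01 (L ++ nseq b 2).
Proof.
move=> rL; case: b => [|[|k]] // _.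
suff: realizable01 (L ++ nseq k.+2 2) /\ realizable01 (L ++ nseq k.+3 2) by case.
elim: k => [|k [IH2 IH3]]; first by split; [exact: realizable01_add2 | exact: realizable01_add3].
by split=> //; rewrite -[k.+4]addn2 nseqD catA; exact: realizable01_add2.
Qed.

Theorem lemma2p4 (L : seq nat) :
  all (fun l => 0 < l) L ->
  (exists x, special2_realization L x) ->
  forall b : nat, 2 <= b ->
    exists y, special2_realization (L ++ nseq b 2) y.
Proof.
move=> _ [x /special2_realizable01 rL] b b_ge2.
have [y [ry hy ly]] := @realizable01_nseq2 L b rL b_ge2.
by exists y; split; rewrite // hy ly !eqxx.
Qed.
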